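(* There is an absolute constant $C>0$ such that the following holds. Let $n,k$ be positive integers, let $p_1,\dots,p_n\in[0,1]$, and let $X_1,\dots,X_n$ be independent indicator random variables with $\mathbb{E}[X_i]=p_i$. Then there exist $q_1,\dots,q_n\in[0,1]$ such that: (1) $|q_i-p_i|\le C/k$ for all $i$; (2) each $q_i$ is an integer multiple of $1/k$; (3) if $Y_1,\dots,Y_n$ are independent indicator random variables with $\mathbb{E}[Y_i]=q_i$, then $\left\|\sum_i X_i-\sum_i Y_i\right\|\le C k^{-1/2}$ and, for every $j\in[n]$, $\left\|\sum_{i\ne j}X_i-\sum_{i\ne j}Y_i\right\|\le Ck^{-1/2}$.
   Context: For integer-valued random variables $A,B$ (identified with their distributions), $\|A-B\|$ denotes the total variation distance $\frac12\sum_{a}|\Pr[A=a]-\Pr[B=a]|$. *)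

From Stdlib Require Import Reals List ZArith.
Import ListNotations.
Open Scope R_scope.

Fixpoint bool_lists (n : nat) : list (list bool) :=
  match n with
  | O => [[]]
  | S n' => map (cons true) (bool_lists n') ++ map (cons false) (bool_lists n')
  end.

Fixpoint outcome_weight (ps : list R) (x : list bool) : R :=
  match ps, x with
  | p :: ps', b :: x' => (if b then p else 1 - p) * outcome_weight ps' x'
  | _, _ => 1
  end.

Definition count_true (x : list bool) : nat :=
  length (filter (fun b : bool => b) x).

Definition indsum_pmf (ps : list R) (m : nat) : R :=
  fold_right Rplus 0
    (map (outcome_weight ps)
       (filter (fun x => Nat.eqb (count_true x) m) (bool_lists (length ps)))).

(* Total variation distance between the sums (both supported on 0..N). *)
Definition tv_indsum (ps qs : list R) : R :=
  / 2 * sum_f_R0 (fun m => Rabs (indsum_pmf ps m - indsum_pmf qs m))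
                 (Nat.max (length ps) (length qs)).

(* Remove the j-th entry (0-based). *)
Definition remove_nth {A : Type} (j : nat) (l : list A) : list A :=
  firstn j l ++ skipn (S j) l.

From Stdlib Require Import Reals List ZArith Lra Lia Psatz Permutation FunctionalExtensionality.
Import ListNotations.
Open Scope R_scope.

(* Carry rounding of
      entries ≤ 1/2 (round down to the grid, pass the remainder on) is a chain
      of such moves of total cost O(1/k) ([carry_round_close]), also after
      deleting one entry ([carry_round_close_remove]).
   4. Entries > 1/2 are rounded through 1-x ([round_all]); combining the two
      chains gives distance O(1/k) ([round_all_l1], [round_all_l1_remove]),
      which is below 3000/√k for k ≥ 4, while the distance is ≤ 1 anyway. *)

Definition rseq := nat -> R.

Definition shift (f : rseq) : rseq := fun m => match m with O => 0 | S m' => f m' end.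
Definition sadd (f g : rseq) : rseq := fun m => f m + g m.
Definition ssub (f g : rseq) : rseq := fun m => f m - g m.
Definition sscale (a : R) (f : rseq) : rseq := fun m => a * f m.

Definition bconv (p : R) (f : rseq) : rseq := fun m => (1 - p) * f m + p * shift f m.

Definition diff (f : rseq) : rseq := fun m => f m - shift f m.

Definition dirac0 : rseq := fun m => match m with O => 1 | _ => 0 end.

Definition bconvs (l : list R) (f : rseq) : rseq := fold_right bconv f l.

Definition pmf (l : list R) : rseq := bconvs l dirac0.

Definition l1 (M : nat) (f : rseq) : R := sum_f_R0 (fun m => Rabs (f m)) M.
Definition l1_le (f : rseq) (c : R) : Prop := forall M, l1 M f <= c.

Definition probs (l : list R) : Prop := Forall (fun x => 0 <= x <= 1) l.

Lemma l1_S M f : l1 (S M) f = l1 M f + Rabs (f (S M)).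
Proof. reflexivity. Qed.

Lemma l1_lin M a b f g :
  l1 M (fun m => a * f m + b * g m) <= Rabs a * l1 M f + Rabs b * l1 M g.
Proof.
  induction M.
  - unfold l1; simpl. eapply Rle_trans; [apply Rabs_triang|]. rewrite !Rabs_mult; lra.
  - rewrite !l1_S. pose proof (Rabs_triang (a * f (S M)) (b * g (S M))).
    rewrite !Rabs_mult in *. nra.
Qed.

Lemma l1_peel M g : l1 (S M) g = Rabs (g O) + l1 M (fun m => g (S m)).
Proof.
  induction M; [unfold l1; simpl; ring|].
  rewrite l1_S, IHM, l1_S. ring.
Qed.

Lemma l1_mono M N f : (M <= N)%nat -> l1 M f <= l1 N f.
Proof.
  induction 1; [lra|]. rewrite l1_S. pose proof (Rabs_pos (f (S m))); lra.
Qed.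

Lemma l1_shift M f : l1 M (shift f) <= l1 M f.
Proof.
  destruct M as [|M]; [unfold l1; simpl; rewrite Rabs_R0; apply Rabs_pos|].
  rewrite l1_peel. simpl. rewrite Rabs_R0, Rplus_0_l. apply l1_mono; lia.
Qed.

Lemma l1_le_ext f g c : (forall m, f m = g m) -> l1_le f c -> l1_le g c.
Proof.
  intros E H M. replace g with f; [apply H|]. now apply functional_extensionality.
Qed.

Lemma l1_le_weaken f c d : l1_le f c -> c <= d -> l1_le f d.
Proof. intros H Hc M; specialize (H M); lra. Qed.

Lemma l1_le_shift f c : l1_le f c -> l1_le (shift f) c.
Proof. intros H M; eapply Rle_trans; [apply l1_shift| apply H]. Qed.

Lemma l1_le_lin a b f g c d : l1_le f c -> l1_le g d ->
  l1_le (fun m => a * f m + b * g m) (Rabs a * c + Rabs b * d).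
Proof.
  intros Hf Hg M. eapply Rle_trans; [apply l1_lin|].
  pose proof (Rabs_pos a); pose proof (Rabs_pos b); specialize (Hf M); specialize (Hg M). nra.
Qed.

Lemma l1_le_add f g c d : l1_le f c -> l1_le g d -> l1_le (sadd f g) (c + d).
Proof.
  intros Hf Hg. apply l1_le_ext with (f := fun m => 1 * f m + 1 * g m).
  { intros; unfold sadd; ring. }
  eapply l1_le_weaken; [apply l1_le_lin; eauto|]. rewrite Rabs_R1; lra.
Qed.

Lemma l1_le_scale a f c : l1_le f c -> l1_le (sscale a f) (Rabs a * c).
Proof.
  intros Hf. apply l1_le_ext with (f := fun m => a * f m + 0 * f m).
  { intros; unfold sscale; ring. }
  eapply l1_le_weaken; [apply l1_le_lin; eauto|]. rewrite Rabs_R0; lra.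
Qed.

Lemma Rabs_minus_one : Rabs (-1) = 1.
Proof. unfold Rabs; destruct (Rcase_abs (-1)); lra. Qed.

Lemma l1_le_sub f g c d : l1_le f c -> l1_le g d -> l1_le (ssub f g) (c + d).
Proof.
  intros Hf Hg. apply l1_le_ext with (f := sadd f (sscale (-1) g)).
  { intros; unfold sadd, sscale, ssub; ring. }
  replace (c + d) with (c + Rabs (-1) * d)
    by (rewrite Rabs_minus_one; ring).
  apply l1_le_add, l1_le_scale; auto.
Qed.

Lemma l1_le_dist_trans f g h c d :
  l1_le (ssub f g) c -> l1_le (ssub g h) d -> l1_le (ssub f h) (c + d).
Proof.
  intros H1 H2. eapply l1_le_ext; [|apply (l1_le_add _ _ _ _ H1 H2)].
  intros; unfold sadd, ssub; ring.
Qed.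

Lemma l1_le_dist_sym f g c : l1_le (ssub f g) c -> l1_le (ssub g f) c.
Proof.
  intros H. apply l1_le_ext with (f := sscale (-1) (ssub f g)).
  { intros; unfold sscale, ssub; ring. }
  eapply l1_le_weaken; [apply l1_le_scale, H|]. rewrite Rabs_minus_one; lra.
Qed.

Lemma l1_le_dist_refl f c : 0 <= c -> l1_le (ssub f f) c.
Proof.
  intros Hc M. replace (l1 M (ssub f f)) with 0; [lra|].
  unfold l1, ssub; induction M; simpl; rewrite Rminus_diag, Rabs_R0; [|rewrite <- IHM]; ring.
Qed.

Lemma l1_le_bconv p f c : 0 <= p <= 1 -> l1_le f c -> l1_le (bconv p f) c.
Proof.
  intros Hp Hf. eapply l1_le_weaken; [apply l1_le_lin; [apply Hf| apply l1_le_shift, Hf]|].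
  rewrite !Rabs_right by lra. lra.
Qed.

Lemma l1_le_bconvs l f c : probs l -> l1_le f c -> l1_le (bconvs l f) c.
Proof. intros Hl Hf; induction Hl; simpl; auto. apply l1_le_bconv; auto. Qed.

Lemma l1_le_diff f c : l1_le f c -> l1_le (diff f) (2 * c).
Proof.
  intros Hf. apply l1_le_ext with (f := ssub f (shift f)); [reflexivity|].
  replace (2 * c) with (c + c) by ring. apply l1_le_sub, l1_le_shift; auto.
Qed.

Lemma l1_le_dirac0 : l1_le dirac0 1.
Proof.
  intros M; induction M; [unfold l1, dirac0; simpl; rewrite Rabs_R1; lra|].
  rewrite l1_S; change (dirac0 (S M)) with 0; rewrite Rabs_R0; lra.
Qed.

Lemma l1_le_pmf l : probs l -> l1_le (pmf l) 1.
Proof. intros; apply l1_le_bconvs; auto; apply l1_le_dirac0. Qed.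

Lemma shift_bconv p f : shift (bconv p f) = bconv p (shift f).
Proof. apply functional_extensionality; intros [|m]; unfold bconv, shift; simpl; ring. Qed.

Lemma shift_diff f : shift (diff f) = diff (shift f).
Proof. apply functional_extensionality; intros [|m]; unfold diff, shift; simpl; ring. Qed.

Lemma bconv_comm p q f : bconv p (bconv q f) = bconv q (bconv p f).
Proof.
  apply functional_extensionality; intros m. unfold bconv at 1 3. rewrite !shift_bconv.
  unfold bconv; ring.
Qed.

Lemma diff_bconv p f : diff (bconv p f) = bconv p (diff f).
Proof.
  apply functional_extensionality; intros m. unfold diff at 1. rewrite shift_bconv.
  unfold bconv, diff; destruct m; simpl; ring.
Qed.

Lemma bconv_add p f g : bconv p (sadd f g) = sadd (bconv p f) (bconv p g).
Proof. apply functional_extensionality; intros [|m]; unfold bconv, sadd, shift; simpl; ring. Qed.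

Lemma bconv_scale p a f : bconv p (sscale a f) = sscale a (bconv p f).
Proof. apply functional_extensionality; intros [|m]; unfold bconv, sscale, shift; simpl; ring. Qed.

Lemma diff_add f g : diff (sadd f g) = sadd (diff f) (diff g).
Proof. apply functional_extensionality; intros [|m]; unfold diff, sadd, shift; simpl; ring. Qed.

Lemma diff_scale a f : diff (sscale a f) = sscale a (diff f).
Proof. apply functional_extensionality; intros [|m]; unfold diff, sscale, shift; simpl; ring. Qed.

Lemma bconvs_bconv l p f : bconvs l (bconv p f) = bconv p (bconvs l f).
Proof. induction l; simpl; auto. rewrite IHl, bconv_comm; auto. Qed.

Lemma bconvs_diff l f : bconvs l (diff f) = diff (bconvs l f).
Proof. induction l; simpl; auto. rewrite IHl, diff_bconv; auto. Qed.

Lemma bconvs_shift l f : bconvs l (shift f) = shift (bconvs l f).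
Proof. induction l; simpl; auto. rewrite IHl, shift_bconv; auto. Qed.

Lemma bconvs_add l f g : bconvs l (sadd f g) = sadd (bconvs l f) (bconvs l g).
Proof. induction l; simpl; auto. rewrite IHl, bconv_add; auto. Qed.

Lemma bconvs_scale l a f : bconvs l (sscale a f) = sscale a (bconvs l f).
Proof. induction l; simpl; auto. rewrite IHl, bconv_scale; auto. Qed.

Lemma bconvs_app l1 l2 f : bconvs (l1 ++ l2) f = bconvs l1 (bconvs l2 f).
Proof. unfold bconvs; apply fold_right_app. Qed.

Lemma pmf_cons x l : pmf (x :: l) = bconv x (pmf l).
Proof. reflexivity. Qed.

Lemma pmf_perm l l' : Permutation l l' -> pmf l = pmf l'.
Proof.
  unfold pmf; induction 1; simpl; auto; [congruence| apply bconv_comm| congruence].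
Qed.

(* Moving mass between one or two Bernoulli factors: the basic perturbation
   identities.  A pair move that preserves u + v only costs a second
   difference. *)
Lemma bconv_move1 u u' g : ssub (bconv u g) (bconv u' g) = sscale (u' - u) (diff g).
Proof. apply functional_extensionality; intros m; unfold bconv, ssub, sscale, diff; ring. Qed.

Lemma bconv_move2 u v u' v' g : u + v = u' + v' ->
  ssub (bconv u (bconv v g)) (bconv u' (bconv v' g)) = sscale (u * v - u' * v') (diff (diff g)).
Proof.
  intros E. apply functional_extensionality; intros m.
  unfold ssub, sscale, diff at 1. rewrite shift_diff. unfold bconv at 1 3. rewrite !shift_bconv.
  unfold bconv, diff. replace v' with (u + v - u') by lra. ring.
Qed.

Lemma pmf_supp l m : (length l < m)%nat -> pmf l m = 0.
Proof.
  revert m; induction l as [|x l IH]; intros m Hm.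
  - simpl in Hm. destruct m; [lia|reflexivity].
  - rewrite pmf_cons. unfold bconv, shift. simpl in Hm. destruct m; [lia|].
    rewrite (IH (S m)), (IH m) by lia. ring.
Qed.

Lemma pmf_nonneg l m : probs l -> 0 <= pmf l m.
Proof.
  intros H; revert m; induction H as [|x l Hx Hl IH]; intros m.
  - unfold pmf; simpl; destruct m; simpl; lra.
  - rewrite pmf_cons. unfold bconv, shift. destruct m.
    + specialize (IH O); nra.
    + pose proof (IH (S m)); pose proof (IH m). nra.
Qed.

Lemma fold_Rplus_app l1 l2 :
  fold_right Rplus 0 (l1 ++ l2) = fold_right Rplus 0 l1 + fold_right Rplus 0 l2.
Proof. induction l1; simpl; [ring|]. rewrite IHl1; ring. Qed.

Lemma fold_Rplus_scale {A} (c : R) (f : A -> R) l :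
  fold_right Rplus 0 (map (fun x => c * f x) l) = c * fold_right Rplus 0 (map f l).
Proof. induction l; simpl; [ring|]. rewrite IHl; ring. Qed.

Lemma filter_map_comm {A B} (f : B -> bool) (g : A -> B) l :
  filter f (map g l) = map g (filter (fun x => f (g x)) l).
Proof. induction l; simpl; auto. destruct (f (g a)); simpl; rewrite IHl; auto. Qed.

Lemma indsum_pmf_eq ps m : indsum_pmf ps m = pmf ps m.
Proof.
  revert m; induction ps as [|p ps IH]; intros m.
  - unfold indsum_pmf; simpl. destruct m; simpl; ring.
  - unfold indsum_pmf. simpl length. simpl bool_lists.
    rewrite filter_app, !filter_map_comm, map_app, !map_map, fold_Rplus_app.
    rewrite pmf_cons. unfold bconv, shift. simpl outcome_weight.
    rewrite (fold_Rplus_scale p (outcome_weight ps)), (fold_Rplus_scale (1 - p) (outcome_weight ps)).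
    change (filter (fun x => count_true (false :: x) =? m)%nat (bool_lists (length ps)))
      with (filter (fun x => count_true x =? m)%nat (bool_lists (length ps))).
    fold (indsum_pmf ps m). rewrite IH.
    destruct m as [|m].
    + replace (filter (fun x => count_true (true :: x) =? 0)%nat (bool_lists (length ps)))
        with (@nil (list bool)) by (induction (bool_lists (length ps)); auto).
      simpl. ring.
    + change (filter (fun x => count_true (true :: x) =? S m)%nat (bool_lists (length ps)))
        with (filter (fun x => count_true x =? m)%nat (bool_lists (length ps))).
      fold (indsum_pmf ps m). rewrite IH. ring.
Qed.

Lemma tv_indsum_le p q c : l1_le (ssub (pmf p) (pmf q)) c -> tv_indsum p q <= c / 2.
Proof.
  intros H. unfold tv_indsum. specialize (H (Nat.max (length p) (length q))).
  unfold l1, ssub in H.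
  rewrite (sum_eq _ (fun m => Rabs (pmf p m - pmf q m))); [lra|].
  intros; rewrite !indsum_pmf_eq; auto.
Qed.

Lemma tv_indsum_le1 p q : probs p -> probs q -> tv_indsum p q <= 1.
Proof.
  intros Hp Hq. enough (tv_indsum p q <= 2 / 2) by lra.
  apply tv_indsum_le. replace 2 with (1 + 1) by ring. apply l1_le_sub; apply l1_le_pmf; auto.
Qed.

Definition binom (n : nat) : rseq := pmf (repeat (/2) n).

Lemma binom_S n : binom (S n) = bconv (/2) (binom n).
Proof. reflexivity. Qed.

Lemma binom_nonneg n m : 0 <= binom n m.
Proof. apply pmf_nonneg. induction n; constructor; auto; lra. Qed.

Lemma binom_supp n m : (n < m)%nat -> binom n m = 0.
Proof. intros; apply pmf_supp; rewrite repeat_length; auto. Qed.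

Lemma binom_add a b : binom (a + b) = bconvs (repeat (/2) a) (binom b).
Proof. unfold binom, pmf. rewrite repeat_app, bconvs_app. reflexivity. Qed.

Lemma binom_ratio n i : (i < n)%nat -> binom n (S i) * (INR i + 1) = binom n i * (INR n - INR i).
Proof.
  revert i; induction n as [|n IH]; intros i Hi; [lia|].
  rewrite !binom_S; unfold bconv, shift. rewrite S_INR.
  destruct i as [|i].
  - destruct n as [|n].
    + rewrite (binom_supp 0 1) by lia. change (binom 0 0%nat) with 1. simpl. field.
    + pose proof (IH O ltac:(lia)) as H. change (INR 0) with 0 in *. rewrite S_INR in *. nra.
  - rewrite S_INR.
    destruct (Nat.eq_dec (S i) n) as [E|E].
    + subst n. rewrite (binom_supp (S i) (S (S i))) by lia.
      pose proof (IH i ltac:(lia)). rewrite S_INR in *. nra.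
    + pose proof (IH i ltac:(lia)). pose proof (IH (S i) ltac:(lia)). rewrite S_INR in *. nra.
Qed.

Lemma binom_up n i : (2 * i + 1 <= n)%nat -> binom n i <= binom n (S i).
Proof.
  intros H. pose proof (binom_ratio n i ltac:(lia)).
  apply le_INR in H. rewrite plus_INR, mult_INR in H. simpl INR in H.
  pose proof (binom_nonneg n i). pose proof (pos_INR i). nra.
Qed.

Lemma binom_down n i : (n <= 2 * i)%nat -> binom n (S i) <= binom n i.
Proof.
  intros H. destruct (Nat.lt_ge_cases i n) as [Hi|Hi].
  - pose proof (binom_ratio n i Hi).
    apply le_INR in H. rewrite mult_INR in H. simpl INR in H.
    pose proof (binom_nonneg n (S i)). pose proof (binom_nonneg n i). pose proof (pos_INR i). nra.
  - rewrite (binom_supp n (S i)) by lia. apply binom_nonneg.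
Qed.

(* By unimodality the partial sums of |Δ binom (2m)| telescope. *)
Lemma l1_diff_binom_even m M :
  ((M <= m)%nat -> l1 M (diff (binom (2 * m))) = binom (2 * m) M) /\
  ((m <= M)%nat -> l1 M (diff (binom (2 * m))) = 2 * binom (2 * m) m - binom (2 * m) M).
Proof.
  induction M as [|M [IH1 IH2]].
  - unfold l1, diff, shift; simpl. rewrite Rminus_0_r, Rabs_right by (apply Rle_ge, binom_nonneg).
    split; intros; [reflexivity|]. replace m with O by lia; simpl; ring.
  - rewrite l1_S.
    change (diff (binom (2 * m)) (S M)) with (binom (2 * m) (S M) - binom (2 * m) M).
    split; intros H.
    + rewrite IH1, Rabs_right by (try lia; pose proof (binom_up (2 * m) M ltac:(lia)); lra). ring.
    + destruct (Nat.le_gt_cases m M) as [H'|H'].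
      * rewrite Rabs_left1 by (pose proof (binom_down (2 * m) M ltac:(lia)); lra).
        destruct (Nat.eq_dec M m) as [->|E]; [rewrite IH1 by lia| rewrite IH2 by lia]; ring.
      * assert (m = S M) by lia; subst m. rewrite IH1 by lia.
        rewrite Rabs_right by (pose proof (binom_up (2 * S M) M ltac:(lia)); lra). ring.
Qed.

Lemma l1_le_diff_binom_even m : l1_le (diff (binom (2 * m))) (2 * binom (2 * m) m).
Proof.
  intros M. eapply Rle_trans; [apply (l1_mono M (Nat.max M m)); lia|].
  rewrite (proj2 (l1_diff_binom_even m (Nat.max M m))) by lia.
  pose proof (binom_nonneg (2 * m) (Nat.max M m)); lra.
Qed.

(* The central term c_m = binom (2m) m satisfies c_(m+1) = c_m (2m+1)/(2m+2),
   hence c_m² (2m+1) ≤ 1. *)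
Lemma central_binom_rec m :
  binom (2 * S m) (S m) * (2 * INR m + 2) = binom (2 * m) m * (2 * INR m + 1).
Proof.
  replace (2 * S m)%nat with (S (S (2 * m))) by lia.
  rewrite !binom_S. unfold bconv at 1. unfold shift at 1. unfold bconv, shift.
  destruct m as [|m].
  - simpl. rewrite (binom_supp 0 1) by lia. change (binom 0 0%nat) with 1. field.
  - pose proof (binom_ratio (2 * S m) (S m) ltac:(lia)) as R1.
    pose proof (binom_ratio (2 * S m) m ltac:(lia)) as R2.
    rewrite mult_INR in *. change (INR 2) with 2 in *. rewrite S_INR in *.
    set (c := binom (2 * S m) (S m)) in *.
    set (u := binom (2 * S m) (S (S m))) in *.
    set (d := binom (2 * S m) m) in *.
    pose proof (pos_INR m).
    assert (Hu : u = c * (INR m + 1) / (INR m + 2)).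
    { apply (Rmult_eq_reg_r (INR m + 2)); [|lra]. field_simplify; lra. }
    assert (Hd : d = c * (INR m + 1) / (INR m + 2)).
    { apply (Rmult_eq_reg_r (INR m + 2)); [|lra]. field_simplify; lra. }
    rewrite Hu, Hd. field. lra.
Qed.

Lemma central_binom_sq m : binom (2 * m) m * binom (2 * m) m * (2 * INR m + 1) <= 1.
Proof.
  induction m as [|m IH]; [change (binom (2 * 0) 0%nat) with 1; simpl; lra|].
  pose proof (central_binom_rec m) as R. rewrite S_INR.
  set (x := binom (2 * S m) (S m)) in *. set (c := binom (2 * m) m) in *.
  pose proof (pos_INR m).
  replace x with (c * (2 * INR m + 1) / (2 * INR m + 2))
    by (apply (Rmult_eq_reg_r (2 * INR m + 2)); [field_simplify|]; lra).
  replace (c * (2 * INR m + 1) / (2 * INR m + 2) * (c * (2 * INR m + 1) / (2 * INR m + 2)) *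
      (2 * (INR m + 1) + 1)) with
    (c * c * (2 * INR m + 1) * ((2 * INR m + 1) * (2 * INR m + 3) / ((2 * INR m + 2) * (2 * INR m + 2))))
    by (field; lra).
  assert ((2 * INR m + 1) * (2 * INR m + 3) / ((2 * INR m + 2) * (2 * INR m + 2)) <= 1).
  { apply (Rmult_le_reg_r ((2 * INR m + 2) * (2 * INR m + 2))); [nra|]. field_simplify; nra. }
  assert (0 <= c * c * (2 * INR m + 1)) by nra.
  nra.
Qed.

Lemma l1_le_diff_binom n : exists h, 0 <= h /\ h * h * (INR n + 1) <= 8 /\ l1_le (diff (binom n)) h.
Proof.
  exists (2 * binom (2 * Nat.div2 n) (Nat.div2 n)).
  set (m := Nat.div2 n). pose proof (binom_nonneg (2 * m) m). pose proof (central_binom_sq m).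
  pose proof (pos_INR m).
  pose proof (Nat.div2_odd n) as Hn. fold m in Hn.
  destruct (Nat.odd n).
  - replace n with (S (2 * m)) by (simpl in Hn; lia).
    rewrite S_INR, mult_INR; simpl INR. repeat split; [lra| nra|].
    rewrite binom_S, diff_bconv. apply l1_le_bconv; [lra| apply l1_le_diff_binom_even].
  - replace n with (2 * m)%nat by (simpl in Hn; lia).
    rewrite mult_INR; simpl INR. repeat split; [lra| nra| apply l1_le_diff_binom_even].
Qed.

Lemma l1_le_diff_bconvs l h : l1_le (diff (pmf l)) h -> forall K g, (forall m, (K < m)%nat -> g m = 0) ->
  l1_le (diff (bconvs l g)) (h * l1 K g).
Proof.
  intros Hh K; induction K as [|K IH]; intros g Hg.
  - replace g with (sscale (g O) dirac0).
    2:{ apply functional_extensionality; intros [|m]; unfold sscale, dirac0; [ring|].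
        rewrite (Hg (S m)) by lia; ring. }
    rewrite bconvs_scale, diff_scale. eapply l1_le_weaken; [apply l1_le_scale, Hh|].
    unfold l1, sscale, dirac0; simpl. rewrite Rmult_1_r. lra.
  - set (g2 := fun m => g (S m)).
    replace g with (sadd (sscale (g O) dirac0) (shift g2)) at 1
      by (apply functional_extensionality; intros [|m]; unfold sadd, sscale, dirac0, shift, g2; ring).
    rewrite l1_peel, bconvs_add, diff_add, bconvs_scale, diff_scale, bconvs_shift, <- shift_diff.
    eapply l1_le_weaken.
    + apply l1_le_add; [apply l1_le_scale, Hh| apply l1_le_shift, IH].
      intros m Hm; apply Hg; lia.
    + fold g2. lra.
Qed.

(* Δ² binom(a+b) = Δ binom a * Δ binom b with a, b ≈ n/2. *)
Lemma l1_le_diff2_binom n : l1_le (diff (diff (binom n))) (16 / (INR n + 1)).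
Proof.
  set (a := Nat.div2 n). set (b := (n - a)%nat).
  assert (Ha : (2 * a <= n <= 2 * a + 1)%nat).
  { unfold a. pose proof (Nat.div2_odd n). destruct (Nat.odd n); simpl in H; lia. }
  replace n with (a + b)%nat at 1 by (unfold b; lia).
  rewrite binom_add, <- bconvs_diff.
  destruct (l1_le_diff_binom a) as [ha [Ha0 [Ha1 Ha2]]].
  destruct (l1_le_diff_binom b) as [hb [Hb0 [Hb1 Hb2]]].
  eapply l1_le_weaken.
  - apply (l1_le_diff_bconvs (repeat (/2) a) ha Ha2 (S b)).
    intros m Hm. unfold diff, shift. destruct m; [lia|]. rewrite !binom_supp by lia. ring.
  - specialize (Hb2 (S b)).
    assert (INR (2 * a) <= INR n <= INR (2 * a + 1)) by (split; apply le_INR; lia).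
    assert (INR b = INR n - INR a) by (unfold b; rewrite minus_INR; [ring|lia]).
    rewrite plus_INR, mult_INR in *. simpl INR in *.
    pose proof (pos_INR a).
    apply Rle_trans with (ha * hb); [nra|].
    apply (Rmult_le_reg_r (INR n + 1)); [lra|].
    replace (16 / (INR n + 1) * (INR n + 1)) with 16 by (field; lra).
    assert (ha * ha * (INR n + 1) <= 16) by nra.
    assert (hb * hb * (INR n + 1) <= 16) by nra.
    pose proof (Rle_0_sqr (ha - hb)); unfold Rsqr in *. nra.
Qed.

Definition lsum (l : list R) : R := fold_right Rplus 0 l.

Definition expect (y : list R) (phi : nat -> R) : R :=
  sum_f_R0 (fun N => pmf y N * phi N) (length y).

Lemma lsum_cons x l : lsum (x :: l) = x + lsum l.
Proof. reflexivity. Qed.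

Lemma sum_lin n a b (f g : nat -> R) :
  sum_f_R0 (fun N => a * f N + b * g N) n = a * sum_f_R0 f n + b * sum_f_R0 g n.
Proof. induction n; simpl; [ring|]. rewrite IHn; ring. Qed.

Lemma expect_cons s y phi :
  expect (s :: y) phi = (1 - s) * expect y phi + s * expect y (fun N => phi (S N)).
Proof.
  unfold expect. simpl length. rewrite pmf_cons. unfold bconv.
  rewrite (sum_eq _ (fun N => (1 - s) * (pmf y N * phi N) + s * (shift (pmf y) N * phi N)))
    by (intros; ring).
  rewrite sum_lin. f_equal.
  - f_equal. simpl. rewrite (pmf_supp y (S (length y))) by lia. ring.
  - f_equal. rewrite decomp_sum by lia. simpl. ring.
Qed.

Lemma expect_lin y a b phi psi :
  expect y (fun N => a * phi N + b * psi N) = a * expect y phi + b * expect y psi.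
Proof. unfold expect. rewrite <- sum_lin. apply sum_eq; intros; ring. Qed.

Lemma expect_ext y phi psi : (forall N, phi N = psi N) -> expect y phi = expect y psi.
Proof. intros H; unfold expect; apply sum_eq; intros; rewrite H; auto. Qed.

Lemma expect_le y phi psi : probs y -> (forall N, phi N <= psi N) -> expect y phi <= expect y psi.
Proof.
  intros Hy H; unfold expect; apply sum_Rle; intros.
  pose proof (pmf_nonneg y n Hy). specialize (H n). nra.
Qed.

Lemma expect_one y : expect y (fun _ => 1) = 1.
Proof.
  induction y as [|s y IH]; [unfold expect; simpl; ring|].
  rewrite expect_cons, IH. ring.
Qed.

Lemma expect_id y : expect y INR = lsum y.
Proof.
  induction y as [|s y IH]; [unfold expect; simpl; ring|].
  rewrite expect_cons, IH.
  rewrite (expect_ext y (fun N => INR (S N)) (fun N => 1 * INR N + 1 * 1))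
    by (intros; rewrite S_INR; ring).
  rewrite expect_lin, expect_one, IH. simpl. ring.
Qed.

Definition lvar (l : list R) : R := lsum (map (fun s => s * (1 - s)) l).

Lemma expect_sq y : expect y (fun N => INR N * INR N) = lsum y * lsum y + lvar y.
Proof.
  induction y as [|s y IH]; [unfold expect, lvar; simpl; ring|].
  rewrite expect_cons, IH.
  rewrite (expect_ext y (fun N => INR (S N) * INR (S N))
     (fun N => 1 * (INR N * INR N) + 2 * (INR N + 1 / 2 * 1))) by (intros; rewrite S_INR; field).
  rewrite expect_lin, IH.
  rewrite (expect_ext y (fun N => INR N + 1 / 2 * 1) (fun N => 1 * INR N + 1 / 2 * 1)) by (intros; ring).
  rewrite expect_lin, expect_one, expect_id. unfold lvar; simpl. fold (lvar y). field.
Qed.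

Lemma lvar_le l : probs l -> lvar l <= lsum l.
Proof. induction 1; unfold lvar in *; simpl; nra. Qed.

Lemma lsum_app a b : lsum (a ++ b) = lsum a + lsum b.
Proof. induction a; simpl; [ring|]. rewrite IHa; ring. Qed.

Definition minc (x : R) : R := Rmin x (1 - x).

Definition mu (y : list R) : R := lsum (map minc y).

(* Bernoulli(x) is the mixture, with weight 2·min(x,1-x), of Bernoulli(1/2)
   and a point mass (at 0 if x ≤ 1/2, at 1 otherwise). *)
Definition mix_weights (y : list R) : list R := map (fun x => 2 * minc x) y.

Lemma minc_bounds x : 0 <= x <= 1 -> 0 <= 2 * minc x <= 1.
Proof. unfold minc, Rmin; destruct (Rle_dec x (1 - x)); lra. Qed.

Lemma mix_weights_probs y : probs y -> probs (mix_weights y).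
Proof. induction 1; constructor; auto; apply minc_bounds; auto. Qed.

Lemma lsum_mix_weights y : lsum (mix_weights y) = 2 * mu y.
Proof. induction y; unfold mix_weights, mu in *; simpl; [ring|]. rewrite IHy; ring. Qed.

Lemma mu_app a b : mu (a ++ b) = mu a + mu b.
Proof. unfold mu; rewrite map_app; apply lsum_app. Qed.

Lemma mu_nonneg y : probs y -> 0 <= mu y.
Proof. induction 1; unfold mu in *; simpl; [lra|]. pose proof (minc_bounds x H); lra. Qed.

Lemma bconv_mixture x F : 0 <= x <= 1 ->
  bconv x F = sadd (sscale (1 - 2 * minc x) (if Rle_dec x (1 - x) then F else shift F))
                   (sscale (2 * minc x) (bconv (/2) F)).
Proof.
  intros Hx. apply functional_extensionality; intros m.
  unfold minc, Rmin. destruct (Rle_dec x (1 - x)); unfold sadd, sscale, bconv; field.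
Qed.

(* Expanding every factor as a mixture, pmf y * binom j is an average of
   shifted binomials binom (N + j), N distributed as pmf (mix_weights y). *)
Lemma l1_le_diff2_mixture y : probs y -> forall j,
  l1_le (diff (diff (bconvs y (binom j))))
        (expect (mix_weights y) (fun N => 16 / (INR (N + j) + 1))).
Proof.
  induction 1 as [|x y Hx Hy IH]; intros j.
  - unfold expect; simpl. change (pmf [] O) with 1. rewrite Rmult_1_l. apply l1_le_diff2_binom.
  - simpl bconvs. rewrite (bconv_mixture x _ Hx), !diff_add, !diff_scale, <- bconvs_bconv, <- binom_S.
    unfold mix_weights. rewrite map_cons. fold (mix_weights y). rewrite expect_cons.
    pose proof (minc_bounds x Hx).
    eapply l1_le_weaken; [apply l1_le_add; apply l1_le_scale|].
    + destruct (Rle_dec x (1 - x)); [apply IH| rewrite <- !shift_diff; apply l1_le_shift, IH].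
    + apply IH.
    + rewrite !Rabs_right by lra.
      rewrite (expect_ext (mix_weights y) (fun N => 16 / (INR (S N + j) + 1))
                 (fun N => 16 / (INR (N + S j) + 1))) by (intros; do 3 f_equal; lia).
      lra.
Qed.

(* Chebyshev-type domination of the kernel 16/(N+1) around the mean m. *)
Lemma kernel_le_quadratic m N : 0 < m ->
  16 / (INR N + 1) <= 32 / m + 64 / (m * m) * ((INR N - m) * (INR N - m)).
Proof.
  intros Hm. pose proof (pos_INR N).
  assert (0 < 32 / m) by (unfold Rdiv; apply Rmult_lt_0_compat; [lra| apply Rinv_0_lt_compat; lra]).
  assert (Hq : 0 <= 64 / (m * m) * ((INR N - m) * (INR N - m))).
  { apply Rmult_le_pos; [|apply Rle_0_sqr].
    apply Rlt_le; unfold Rdiv; apply Rmult_lt_0_compat; [lra| apply Rinv_0_lt_compat; nra]. }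
  destruct (Rle_lt_dec (m / 2) (INR N)).
  - enough (16 / (INR N + 1) <= 32 / m) by lra.
    apply (Rmult_le_reg_r (m * (INR N + 1))); [nra|].
    replace (16 / (INR N + 1) * (m * (INR N + 1))) with (16 * m) by (field; lra).
    replace (32 / m * (m * (INR N + 1))) with (32 * (INR N + 1)) by (field; lra). nra.
  - enough (16 / (INR N + 1) <= 16 /\ 16 <= 64 / (m * m) * ((INR N - m) * (INR N - m))) by lra.
    split.
    + apply (Rmult_le_reg_r (INR N + 1)); [lra|].
      replace (16 / (INR N + 1) * (INR N + 1)) with 16 by (field; lra). nra.
    + apply (Rmult_le_reg_r (m * m)); [nra|].
      replace (64 / (m * m) * ((INR N - m) * (INR N - m)) * (m * m))
        with (64 * ((INR N - m) * (INR N - m))) by (field; lra). nra.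
Qed.

Lemma expect_quadratic S : probs S -> 0 < lsum S ->
  expect S (fun N => 32 / lsum S + 64 / (lsum S * lsum S) * ((INR N - lsum S) * (INR N - lsum S)))
  <= 96 / lsum S.
Proof.
  intros HS Hm. set (m := lsum S) in *.
  rewrite (expect_ext S _ (fun N => (32 / m + 64 / (m * m) * (m * m)) * 1 +
       (64 / (m * m)) * (1 * (INR N * INR N) + (- 2 * m) * INR N))) by (intros; ring).
  rewrite !expect_lin, expect_one, expect_sq, expect_id. fold m.
  pose proof (lvar_le S HS). fold m in H.
  replace ((32 / m + 64 / (m * m) * (m * m)) * 1 + 64 / (m * m) * (1 * (m * m + lvar S) + -2 * m * m))
    with (32 / m + 64 / (m * m) * lvar S) by (field; lra).
  assert (0 < 64 / (m * m)) by (unfold Rdiv; apply Rmult_lt_0_compat; [lra| apply Rinv_0_lt_compat; nra]).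
  apply Rle_trans with (32 / m + 64 / (m * m) * m); [nra| right; field; lra].
Qed.

Lemma l1_le_diff2_pmf y : probs y -> 0 < mu y -> l1_le (diff (diff (pmf y))) (48 / mu y).
Proof.
  intros Hy Hmu. unfold pmf. change dirac0 with (binom O).
  eapply l1_le_weaken; [apply l1_le_diff2_mixture, Hy|].
  pose proof (lsum_mix_weights y) as Hm.
  replace (48 / mu y) with (96 / lsum (mix_weights y)) by (rewrite Hm; field; lra).
  eapply Rle_trans; [|apply expect_quadratic; [apply mix_weights_probs, Hy| lra]].
  apply expect_le; [apply mix_weights_probs, Hy|]. intros N.
  rewrite Nat.add_0_r. apply kernel_le_quadratic. lra.
Qed.

Definition bounded (c : R) (l : list R) : Prop := Forall (fun v => 0 <= v <= c) l.

Lemma bounded_weaken c d l : c <= d -> bounded c l -> bounded d l.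
Proof. intros Hcd; apply Forall_impl; intros; lra. Qed.

Lemma bounded_app c a b : bounded c a -> bounded c b -> bounded c (a ++ b).
Proof. intros; apply Forall_app; auto. Qed.

Lemma lsum_bounded_nonneg c l : bounded c l -> 0 <= lsum l.
Proof. induction 1; simpl; lra. Qed.

Definition grid_floor (K a : R) : R := IZR (Int_part (K * a)) / K.

Lemma grid_floor_spec K a : 0 < K -> grid_floor K a <= a < grid_floor K a + / K.
Proof.
  intros HK. destruct (base_Int_part (K * a)) as [H1 H2]. unfold grid_floor. split.
  - apply (Rmult_le_reg_r K); [lra|].
    replace (IZR (Int_part (K * a)) / K * K) with (IZR (Int_part (K * a))) by (field; lra). lra.
  - apply (Rmult_lt_reg_r K); [lra|].
    replace ((IZR (Int_part (K * a)) / K + / K) * K) with (IZR (Int_part (K * a)) + 1)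
      by (field; lra). lra.
Qed.

Lemma grid_floor_nonneg K a : 0 < K -> 0 <= a -> 0 <= grid_floor K a.
Proof.
  intros HK Ha. destruct (base_Int_part (K * a)) as [H1 H2]. unfold grid_floor.
  assert (IZR (-1) < IZR (Int_part (K * a))) by (change (IZR (-1)) with (-1); nra).
  apply lt_IZR in H. assert (0 <= Int_part (K * a))%Z by lia. apply IZR_le in H0.
  unfold Rdiv; apply Rmult_le_pos; [auto| left; apply Rinv_0_lt_compat; lra].
Qed.

Lemma remove_nth_app_length {A} (L : list A) x M : remove_nth (length L) (L ++ x :: M) = L ++ M.
Proof.
  unfold remove_nth. rewrite firstn_app, skipn_app, firstn_all, Nat.sub_diag, skipn_all2 by (simpl; lia).
  replace (S (length L) - length L)%nat with 1%nat by lia. simpl. rewrite app_nil_r. reflexivity.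
Qed.

Lemma Forall_remove_nth {A} (P : A -> Prop) j l : Forall P l -> Forall P (remove_nth j l).
Proof.
  revert j; induction l as [|x l IH]; intros j H; [destruct j; constructor|].
  inversion H; subst. destruct j; [exact H3|]. unfold remove_nth in *. simpl. constructor; auto.
Qed.

Fixpoint carry_round (K r : R) (l : list R) : list R :=
  match l with
  | [] => []
  | x :: xs => grid_floor K (x + r) :: carry_round K (x + r - grid_floor K (x + r)) xs
  end.

Fixpoint carry_out (K r : R) (l : list R) : R :=
  match l with [] => r | x :: xs => carry_out K (x + r - grid_floor K (x + r)) xs end.

Lemma length_carry_round K r l : length (carry_round K r l) = length l.
Proof. revert r; induction l; intros; simpl; auto. Qed.

Lemma carry_round_app K A B r :
  carry_round K r (A ++ B) = carry_round K r A ++ carry_round K (carry_out K r A) B.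
Proof. revert r; induction A; intros r; simpl; auto. rewrite IHA; auto. Qed.

Lemma carry_out_bound K r l : 0 < K -> 0 <= r < / K -> 0 <= carry_out K r l < / K.
Proof.
  revert r; induction l; intros r HK Hr; simpl; auto.
  apply IHl; auto. destruct (grid_floor_spec K (a + r) HK); lra.
Qed.

Lemma carry_round_bounded K r l : 4 <= K -> 0 <= r < / K -> bounded (1/2) l ->
  bounded (3/4) (carry_round K r l).
Proof.
  intros HK Hr Hl; revert r Hr; induction Hl as [|x l Hx Hl IH]; intros r Hr; simpl; constructor.
  - destruct (grid_floor_spec K (x + r) ltac:(lra)).
    pose proof (grid_floor_nonneg K (x + r) ltac:(lra) ltac:(lra)).
    assert (/ K <= / 4) by (apply Rinv_le_contravar; lra). lra.
  - apply IH. destruct (grid_floor_spec K (x + r) ltac:(lra)); lra.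
Qed.

Definition add_head (r : R) (l : list R) : list R :=
  match l with [] => [] | x :: xs => (x + r) :: xs end.

Lemma add_head_0 l : add_head 0 l = l.
Proof. destruct l; simpl; auto. rewrite Rplus_0_r; auto. Qed.

(* Entries > 1/2 are rounded through x ↦ 1 - x. *)
Definition flip (b : bool) (v : R) : R := if b then 1 - v else v.

Lemma map_flip_false l : map (flip false) l = l.
Proof. induction l; simpl; auto. rewrite IHl; auto. Qed.

Lemma minc_flip b v : minc (flip b v) = minc v.
Proof. destruct b; unfold flip, minc, Rmin; [|reflexivity]. repeat destruct Rle_dec; lra. Qed.

Lemma mu_flip_lb b l : bounded (3/4) l -> lsum l / 3 <= mu (map (flip b) l).
Proof.
  induction 1; unfold mu in *; simpl; [lra|].
  rewrite minc_flip. assert (x / 3 <= minc x) by (unfold minc, Rmin; destruct (Rle_dec _ _); lra).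
  lra.
Qed.

Lemma flip_probs b l : probs l -> probs (map (flip b) l).
Proof. induction 1; constructor; auto. destruct b; unfold flip; lra. Qed.

Definition ctx_pmf (b : bool) (rest l : list R) : rseq := pmf (map (flip b) l ++ rest).

Lemma ctx_pmf_front1 b rest pre u L :
  ctx_pmf b rest (pre ++ u :: L) = bconv (flip b u) (ctx_pmf b rest (pre ++ L)).
Proof.
  unfold ctx_pmf. rewrite <- pmf_cons. apply pmf_perm.
  rewrite !map_app, <- !app_assoc. simpl. apply Permutation_sym, Permutation_middle.
Qed.

Lemma ctx_pmf_probs b rest l : probs rest -> probs l -> probs (map (flip b) l ++ rest).
Proof. intros; apply Forall_app; split; auto; apply flip_probs; auto. Qed.

Lemma ctx_pmf_move1 b rest pre u u' L : probs rest -> probs (pre ++ L) ->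
  l1_le (ssub (ctx_pmf b rest (pre ++ u :: L)) (ctx_pmf b rest (pre ++ u' :: L)))
        (2 * Rabs (u - u')).
Proof.
  intros Hrest HL. rewrite !ctx_pmf_front1, bconv_move1.
  replace (2 * Rabs (u - u')) with (Rabs (flip b u' - flip b u) * (2 * 1)).
  - apply l1_le_scale, l1_le_diff, l1_le_pmf, ctx_pmf_probs; auto.
  - replace (Rabs (flip b u' - flip b u)) with (Rabs (u - u')); [ring|].
    destruct b; unfold flip; [f_equal; ring| rewrite <- Rabs_Ropp; f_equal; ring].
Qed.

Lemma ctx_pmf_move2 b rest pre u v u' v' L M : u + v = u' + v' ->
  l1_le (diff (diff (ctx_pmf b rest (pre ++ L)))) M ->
  l1_le (ssub (ctx_pmf b rest (pre ++ u :: v :: L)) (ctx_pmf b rest (pre ++ u' :: v' :: L)))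
        (Rabs (u * v - u' * v') * M).
Proof.
  intros E HM. rewrite !ctx_pmf_front1, bconv_move2.
  - eapply l1_le_weaken; [apply l1_le_scale, HM|]. right.
    do 2 f_equal.
    replace v' with (u + v - u') by lra. destruct b; unfold flip; ring.
  - destruct b; unfold flip; lra.
Qed.

Definition chain_cost (r : R) (l : list R) : R :=
  match l with [] => 0 | x :: xs => r + x + 2 * lsum xs end.

Lemma chain_cost_bounds r l : 0 <= r -> bounded (1/2) l -> 0 <= chain_cost r l <= r + 2 * lsum l.
Proof.
  intros Hr Hl. destruct Hl as [|x l Hx Hl]; [simpl; lra|].
  pose proof (lsum_bounded_nonneg _ _ Hl). cbn [chain_cost]. rewrite lsum_cons. lra.
Qed.

Section CarryRoundingCost.

(* The rounded list is placed among already rounded entries [pre] and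
   arbitrary independent indicators [rest]; [b] selects whether the entries
   stand for themselves or for their complements 1 - x. *)
Variables (b : bool) (K : R) (rest : list R).
Hypothesis K_ge4 : 4 <= K.
Hypothesis rest_probs : probs rest.

Lemma inv_K_le : 0 < / K <= / 4.
Proof. split; [apply Rinv_0_lt_compat| apply Rinv_le_contravar]; lra. Qed.

(* Last step of the chain: a single entry moves by less than 1/K. *)
Lemma carry_round_step_last pre x r : bounded (3/4) pre -> 0 <= x <= 1/2 -> 0 <= r < / K ->
  l1_le (ssub (ctx_pmf b rest (pre ++ add_head r [x])) (ctx_pmf b rest (pre ++ carry_round K r [x])))
        (2 / K).
Proof.
  intros Hpre Hx Hr. simpl. pose proof inv_K_le.
  destruct (grid_floor_spec K (x + r) ltac:(lra)).
  eapply l1_le_weaken; [apply ctx_pmf_move1; auto|].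
  - rewrite app_nil_r. apply (bounded_weaken (3/4)); [lra| auto].
  - unfold Rabs; destruct (Rcase_abs _); unfold Rdiv; lra.
Qed.

(* Inner step: x+r becomes the grid point q and the remainder r' = x+r-q moves
   to the next entry; the move costs |r'(x₂ - q)|·M ≤ M(q + x₂)/K. *)
Lemma carry_round_step_pair M pre x x2 xs r : 0 <= M -> 0 <= r < / K ->
  0 <= x <= 1/2 -> 0 <= x2 <= 1/2 ->
  l1_le (diff (diff (ctx_pmf b rest (pre ++ xs)))) M ->
  l1_le (ssub (ctx_pmf b rest (pre ++ (x + r) :: x2 :: xs))
              (ctx_pmf b rest (pre ++ grid_floor K (x + r) :: (x2 + (x + r - grid_floor K (x + r))) :: xs)))
        (M * (grid_floor K (x + r) + x2) / K).
Proof.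
  intros HM Hr Hx Hx2 HD. pose proof inv_K_le.
  set (q := grid_floor K (x + r)). set (r' := x + r - q).
  destruct (grid_floor_spec K (x + r) ltac:(lra)) as [Hq1 Hq2]. fold q in Hq1, Hq2.
  assert (Hq0 : 0 <= q) by (apply grid_floor_nonneg; lra).
  eapply l1_le_weaken; [apply ctx_pmf_move2; [unfold r'; ring| exact HD]|].
  replace ((x + r) * x2 - q * (x2 + r')) with (r' * (x2 - q)) by (unfold r'; ring).
  rewrite Rabs_mult, (Rabs_right r') by (unfold r'; lra).
  assert (Rabs (x2 - q) <= q + x2) by (unfold Rabs; destruct (Rcase_abs _); lra).
  apply Rle_trans with (/ K * (q + x2) * M); [|right; field; lra].
  apply Rmult_le_compat_r; [lra|]. apply Rmult_le_compat; unfold r'; try lra.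
  apply Rabs_pos.
Qed.

(* The whole chain, by induction along the list.  M bounds ‖Δ²‖ of every law
   whose μ is not much below the mass s of the chain. *)
Lemma carry_round_chain M s : 0 <= M ->
  (forall Y, probs Y -> (s - 2) / 3 <= mu Y -> l1_le (diff (diff (pmf Y))) M) ->
  forall l pre r, bounded (1/2) l -> bounded (3/4) pre -> 0 <= r < / K ->
  s = lsum pre + r + lsum l ->
  l1_le (ssub (ctx_pmf b rest (pre ++ add_head r l)) (ctx_pmf b rest (pre ++ carry_round K r l)))
        (M * chain_cost r l / K + 2 / K).
Proof.
  intros HM HY l. pose proof inv_K_le.
  induction l as [|x l IH]; intros pre r Hl Hpre Hr Hs.
  { apply l1_le_dist_refl. simpl. unfold Rdiv. nra. }
  apply Forall_cons_iff in Hl as [Hx Hl].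
  destruct l as [|x2 xs].
  { eapply l1_le_weaken; [apply carry_round_step_last; auto|].
    simpl. unfold Rdiv. pose proof (Rmult_le_pos M (r + x + 2 * 0) ltac:(lra) ltac:(lra)). nra. }
  pose proof Hl as Hl'. apply Forall_cons_iff in Hl' as [Hx2 Hxs].
  set (q := grid_floor K (x + r)). set (r' := x + r - q).
  destruct (grid_floor_spec K (x + r) ltac:(lra)) as [Hq1 Hq2]. fold q in Hq1, Hq2.
  assert (Hq0 : 0 <= q) by (apply grid_floor_nonneg; lra).
  assert (Hpre' : bounded (3/4) (pre ++ [q])) by (apply bounded_app; [auto| constructor; [lra| constructor]]).
  assert (IHr := IH (pre ++ [q]) r' Hl Hpre' ltac:(unfold r'; lra)).
  rewrite lsum_app, !lsum_cons in IHr. change (lsum []) with 0 in IHr. rewrite !lsum_cons in Hs. rewrite <- !app_assoc in IHr. cbn [app add_head] in IHr.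
  change (carry_round K r (x :: x2 :: xs)) with (q :: carry_round K r' (x2 :: xs)).
  eapply l1_le_weaken; [eapply l1_le_dist_trans; [|apply IHr; unfold r'; lra]|].
  - apply carry_round_step_pair; [exact HM| exact Hr| exact Hx| exact Hx2|].
    assert (Hb : bounded (3/4) (pre ++ xs))
      by (apply bounded_app; auto; apply (bounded_weaken (1/2)); auto; lra).
    apply HY; [apply ctx_pmf_probs; auto; apply (bounded_weaken (3/4)); auto; lra|].
    rewrite mu_app. pose proof (mu_nonneg rest rest_probs).
    pose proof (mu_flip_lb b _ Hb). rewrite lsum_app in H1. lra.
  - cbn [chain_cost]. rewrite lsum_cons. unfold Rdiv.
    fold q. right. unfold r'. ring.
Qed.

Lemma carry_round_close l pre r : bounded (1/2) l -> bounded (3/4) pre -> 0 <= r < / K ->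
  l1_le (ssub (ctx_pmf b rest (pre ++ add_head r l)) (ctx_pmf b rest (pre ++ carry_round K r l)))
        (600 / K).
Proof.
  intros Hl Hpre Hr. pose proof inv_K_le.
  set (s := lsum pre + r + lsum l).
  pose proof (lsum_bounded_nonneg _ _ Hpre). pose proof (lsum_bounded_nonneg _ _ Hl).
  assert (Hc : 0 <= chain_cost r l <= 2 * s)
    by (pose proof (chain_cost_bounds r l ltac:(lra) Hl); unfold s; lra).
  destruct (Rle_lt_dec s 6) as [Hs|Hs].
  - (* small mass: ‖Δ² pmf Y‖₁ ≤ 4 always *)
    assert (HY4 : forall Y, probs Y -> (s - 2) / 3 <= mu Y -> l1_le (diff (diff (pmf Y))) 4).
    { intros Y HY _. eapply l1_le_weaken; [apply l1_le_diff, l1_le_diff, l1_le_pmf, HY|]. lra. }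
    eapply l1_le_weaken; [apply (carry_round_chain 4 s); auto; lra|].
    unfold Rdiv. rewrite <- Rmult_plus_distr_r. apply Rmult_le_compat_r; lra.
  - (* large mass: μ(Y) ≥ s/6, so ‖Δ² pmf Y‖₁ ≤ 288/s *)
    eapply l1_le_weaken; [apply (carry_round_chain (288 / s) s); auto|].
    + unfold Rdiv; apply Rmult_le_pos; [lra| left; apply Rinv_0_lt_compat; lra].
    + intros Y HY Hmu.
      eapply l1_le_weaken; [apply l1_le_diff2_pmf; auto; lra|].
      apply (Rmult_le_reg_r (mu Y * s)); [nra|].
      replace (48 / mu Y * (mu Y * s)) with (48 * s) by (field; lra).
      replace (288 / s * (mu Y * s)) with (288 * mu Y) by (field; lra). lra.
    + assert (288 / s * chain_cost r l <= 576).
      { apply (Rmult_le_reg_r s); [lra|].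
        replace (288 / s * chain_cost r l * s) with (288 * chain_cost r l) by (field; lra). lra. }
      apply Rle_trans with ((288 / s * chain_cost r l + 2) / K); [right; field; lra|].
      unfold Rdiv. apply Rmult_le_compat_r; lra.
Qed.

Lemma add_head_swap pre r r' B : bounded (3/4) pre -> bounded (1/2) B ->
  0 <= r < / K -> 0 <= r' < / K ->
  l1_le (ssub (ctx_pmf b rest (pre ++ add_head r B)) (ctx_pmf b rest (pre ++ add_head r' B))) (2 / K).
Proof.
  intros Hpre HB Hr Hr'. pose proof inv_K_le.
  destruct B as [|y B]; [apply l1_le_dist_refl; unfold Rdiv; lra|].
  apply Forall_cons_iff in HB as [Hy HB].
  eapply l1_le_weaken; [apply ctx_pmf_move1; auto|].
  - apply (bounded_weaken (3/4)); [lra|]. apply bounded_app; auto.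
    apply (bounded_weaken (1/2)); auto; lra.
  - unfold Rabs; destruct (Rcase_abs _); unfold Rdiv; lra.
Qed.

(* Around the deleted entry the rounded list is the concatenation of two
   carry roundings whose carries differ, so three applications of
   [carry_round_close] and one of [add_head_swap] suffice. *)
Lemma carry_round_close_remove l j : bounded (1/2) l -> (j < length l)%nat ->
  l1_le (ssub (ctx_pmf b rest (remove_nth j l)) (ctx_pmf b rest (remove_nth j (carry_round K 0 l))))
        (1802 / K).
Proof.
  intros Hl Hj. pose proof inv_K_le.
  assert (H0 : 0 <= 0 < / K) by lra.
  destruct (nth_split l 0 Hj) as [A [B [El HA]]]. set (x := nth j l 0) in El.
  rewrite El in Hl |- *. rewrite <- HA, remove_nth_app_length, carry_round_app. simpl carry_round.
  rewrite <- (length_carry_round K 0 A), remove_nth_app_length.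
  apply Forall_app in Hl as [HlA HlB]. apply Forall_cons_iff in HlB as [Hx HB].
  set (rho := carry_out K 0 A).
  set (rho' := x + rho - grid_floor K (x + rho)).
  assert (Hrho : 0 <= rho < / K) by (apply carry_out_bound; lra).
  assert (Hrho' : 0 <= rho' < / K)
    by (unfold rho'; destruct (grid_floor_spec K (x + rho)); lra).
  assert (HcA : bounded (3/4) (carry_round K 0 A)) by (apply carry_round_bounded; auto).
  replace (1802 / K) with (600 / K + (600 / K + (2 / K + 600 / K))) by (field; lra).
  eapply l1_le_dist_trans.
  { pose proof (carry_round_close (A ++ B) [] 0 ltac:(apply bounded_app; auto) (Forall_nil _) H0) as T.
    simpl app in T. rewrite add_head_0, carry_round_app in T. exact T. }
  eapply l1_le_dist_trans; [apply l1_le_dist_sym, carry_round_close; auto|].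
  eapply l1_le_dist_trans; [apply add_head_swap; eauto|].
  apply carry_round_close; auto.
Qed.

End CarryRoundingCost.

Definition is_low (x : R) : bool := if Rle_dec x (1/2) then true else false.
Definition low_part (p : list R) : list R := filter is_low p.
Definition high_part (p : list R) : list R :=
  map (flip true) (filter (fun x => negb (is_low x)) p).

Fixpoint round_all (K rL rH : R) (p : list R) : list R :=
  match p with
  | [] => []
  | x :: xs =>
    if Rle_dec x (1/2) then grid_floor K (x + rL) :: round_all K (x + rL - grid_floor K (x + rL)) rH xs
    else (1 - grid_floor K (1 - x + rH)) :: round_all K rL (1 - x + rH - grid_floor K (1 - x + rH)) xs
  end.

Lemma low_part_cons x xs : low_part (x :: xs) = if Rle_dec x (1/2) then x :: low_part xs else low_part xs.
Proof. unfold low_part, is_low; simpl; destruct (Rle_dec x (1/2)); auto. Qed.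

Lemma high_part_cons x xs :
  high_part (x :: xs) = if Rle_dec x (1/2) then high_part xs else (1 - x) :: high_part xs.
Proof. unfold high_part, is_low; simpl; destruct (Rle_dec x (1/2)); auto. Qed.

Lemma low_part_bounded p : probs p -> bounded (1/2) (low_part p).
Proof.
  induction 1 as [|x p Hx Hp IH]; [constructor|].
  rewrite low_part_cons. destruct (Rle_dec x (1/2)); auto. constructor; auto; lra.
Qed.

Lemma high_part_bounded p : probs p -> bounded (1/2) (high_part p).
Proof.
  induction 1 as [|x p Hx Hp IH]; [constructor|].
  rewrite high_part_cons. destruct (Rle_dec x (1/2)); auto. constructor; auto; lra.
Qed.

Lemma perm_split p : Permutation p (low_part p ++ map (flip true) (high_part p)).
Proof.
  induction p as [|x xs IH]; [simpl; auto|].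
  rewrite low_part_cons, high_part_cons. destruct (Rle_dec x (1/2)).
  - simpl. apply perm_skip, IH.
  - simpl map. replace (1 - (1 - x)) with x by ring.
    eapply perm_trans; [apply perm_skip, IH|]. apply Permutation_middle.
Qed.

Lemma round_all_perm K p : forall rL rH, Permutation (round_all K rL rH p)
  (carry_round K rL (low_part p) ++ map (flip true) (carry_round K rH (high_part p))).
Proof.
  induction p as [|x xs IH]; intros rL rH; [simpl; auto|].
  simpl round_all. rewrite low_part_cons, high_part_cons. destruct (Rle_dec x (1/2)).
  - simpl. apply perm_skip, IH.
  - simpl carry_round. simpl map. eapply perm_trans; [apply perm_skip, IH|]. apply Permutation_middle.
Qed.

Lemma remove_nth_split K p : forall j rL rH, (j < length p)%nat ->
  (exists j', (j' < length (low_part p))%nat /\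
     Permutation (remove_nth j p) (remove_nth j' (low_part p) ++ map (flip true) (high_part p)) /\
     Permutation (remove_nth j (round_all K rL rH p))
       (remove_nth j' (carry_round K rL (low_part p)) ++ map (flip true) (carry_round K rH (high_part p)))) \/
  (exists j', (j' < length (high_part p))%nat /\
     Permutation (remove_nth j p) (low_part p ++ map (flip true) (remove_nth j' (high_part p))) /\
     Permutation (remove_nth j (round_all K rL rH p))
       (carry_round K rL (low_part p) ++ map (flip true) (remove_nth j' (carry_round K rH (high_part p))))).
Proof.
  induction p as [|x xs IH]; intros j rL rH Hj; [simpl in Hj; lia|].
  simpl round_all. rewrite low_part_cons, high_part_cons.
  destruct (Rle_dec x (1/2)), j as [|j]; simpl carry_round.
  - left. exists O. split; [simpl; lia|]. split; [apply perm_split| apply round_all_perm].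
  - simpl in Hj. destruct (IH j (x + rL - grid_floor K (x + rL)) rH ltac:(lia))
      as [[j' [Hj' [P1 P2]]]|[j' [Hj' [P1 P2]]]].
    + left. exists (S j'). split; [simpl; lia|]. split; simpl; apply perm_skip; auto.
    + right. exists j'. split; auto. split; simpl; apply perm_skip; auto.
  - right. exists O. split; [simpl; lia|]. split; [apply perm_split| apply round_all_perm].
  - simpl in Hj. destruct (IH j rL (1 - x + rH - grid_floor K (1 - x + rH)) ltac:(lia))
      as [[j' [Hj' [P1 P2]]]|[j' [Hj' [P1 P2]]]].
    + left. exists j'. split; auto. unfold remove_nth; simpl. fold (remove_nth j xs).
      replace (1 - (1 - x)) with x by ring.
      split; (eapply perm_trans; [apply perm_skip; eauto|]); apply Permutation_middle.
    + right. exists (S j'). split; [simpl; lia|]. unfold remove_nth; simpl.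
      fold (remove_nth j xs). replace (1 - (1 - x)) with x by ring.
      split; (eapply perm_trans; [apply perm_skip; eauto|]); apply Permutation_middle.
Qed.

Definition grid_close (K x q : R) : Prop :=
  Rabs (q - x) <= / K /\ 0 <= q <= 1 /\ exists m : Z, q = IZR m / K.

Lemma grid_floor_le1 k a : (0 < k)%nat -> 0 <= a < 1 + / INR k -> grid_floor (INR k) a <= 1.
Proof.
  intros Hk Ha. assert (Hkp : 0 < INR k) by (apply lt_0_INR; auto).
  destruct (base_Int_part (INR k * a)) as [H1 H2]. unfold grid_floor.
  assert (INR k * a < INR k + 1).
  { replace (INR k + 1) with (INR k * (1 + / INR k)) by (field; lra). apply Rmult_lt_compat_l; lra. }
  assert (IZR (Int_part (INR k * a)) < IZR (Z.of_nat k + 1))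
    by (rewrite plus_IZR, <- INR_IZR_INZ; simpl; lra).
  apply lt_IZR in H0. assert (Int_part (INR k * a) <= Z.of_nat k)%Z by lia.
  apply IZR_le in H3. rewrite <- INR_IZR_INZ in H3.
  apply (Rmult_le_reg_r (INR k)); [lra|].
  replace (IZR (Int_part (INR k * a)) / INR k * INR k) with (IZR (Int_part (INR k * a)))
    by (field; lra). lra.
Qed.

Lemma round_all_close k p : (0 < k)%nat -> probs p -> forall rL rH,
  0 <= rL < / INR k -> 0 <= rH < / INR k ->
  Forall2 (grid_close (INR k)) p (round_all (INR k) rL rH p).
Proof.
  intros Hk Hp. assert (Hkp : 0 < INR k) by (apply lt_0_INR; auto).
  assert (/ INR k <= 1) by (rewrite <- Rinv_1; apply Rinv_le_contravar; [lra|]; apply (le_INR 1); lia).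
  induction Hp as [|x xs Hx Hxs IH]; intros rL rH HrL HrH; simpl; [constructor|].
  destruct (Rle_dec x (1/2)).
  - destruct (grid_floor_spec (INR k) (x + rL) Hkp).
    pose proof (grid_floor_nonneg (INR k) (x + rL) Hkp ltac:(lra)).
    constructor; [|apply IH; auto; lra].
    split; [unfold Rabs; destruct (Rcase_abs _); lra|]. split.
    + split; auto. apply grid_floor_le1; auto; lra.
    + exists (Int_part (INR k * (x + rL))). reflexivity.
  - destruct (grid_floor_spec (INR k) (1 - x + rH) Hkp).
    pose proof (grid_floor_nonneg (INR k) (1 - x + rH) Hkp ltac:(lra)).
    pose proof (grid_floor_le1 k (1 - x + rH) Hk ltac:(lra)).
    constructor; [|apply IH; auto; lra].
    split; [unfold Rabs; destruct (Rcase_abs _); lra|]. split; [lra|].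
    exists (Z.of_nat k - Int_part (INR k * (1 - x + rH)))%Z. unfold grid_floor.
    rewrite minus_IZR, <- INR_IZR_INZ. field. lra.
Qed.

Lemma grid_close_probs K p q : Forall2 (grid_close K) p q -> probs q.
Proof. induction 1 as [|x q xs qs [_ [Hq _]] _ IH]; constructor; auto. Qed.

Lemma Forall2_nth {A B} (P : A -> B -> Prop) l1 l2 d1 d2 i :
  Forall2 P l1 l2 -> (i < length l1)%nat -> P (nth i l1 d1) (nth i l2 d2).
Proof.
  intros H; revert i; induction H; intros i Hi; simpl in *; [lia|].
  destruct i; auto. apply IHForall2; lia.
Qed.

(* Distance between the laws before and after rounding: two carry roundings,
   one for each part, each with the other part as independent [rest]. *)
Lemma round_all_l1 K p : 4 <= K -> probs p ->
  l1_le (ssub (pmf p) (pmf (round_all K 0 0 p))) (1200 / K).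
Proof.
  intros HK Hp. pose proof (low_part_bounded p Hp) as HL. pose proof (high_part_bounded p Hp) as HH.
  assert (H0 : 0 <= 0 < / K) by (split; [lra| apply Rinv_0_lt_compat; lra]).
  assert (HcL := carry_round_bounded K 0 _ HK H0 HL).
  rewrite (pmf_perm _ _ (perm_split p)), (pmf_perm _ _ (round_all_perm K p 0 0)).
  replace (1200 / K) with (600 / K + 600 / K) by (field; lra).
  eapply l1_le_dist_trans.
  - pose proof (carry_round_close false K (map (flip true) (high_part p)) HK
      (flip_probs _ _ (bounded_weaken (1/2) 1 _ ltac:(lra) HH)) (low_part p) [] 0 HL (Forall_nil _) H0) as T.
    unfold ctx_pmf in T. simpl app in T. rewrite add_head_0, !map_flip_false in T. exact T.
  - rewrite !(pmf_perm (carry_round K 0 (low_part p) ++ _) _ (Permutation_app_comm _ _)).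
    pose proof (carry_round_close true K (carry_round K 0 (low_part p)) HK
      (bounded_weaken (3/4) 1 _ ltac:(lra) HcL) (high_part p) [] 0 HH (Forall_nil _) H0) as T.
    unfold ctx_pmf in T. simpl app in T. rewrite add_head_0 in T. exact T.
Qed.

Lemma round_all_l1_remove K p j : 4 <= K -> probs p -> (j < length p)%nat ->
  l1_le (ssub (pmf (remove_nth j p)) (pmf (remove_nth j (round_all K 0 0 p)))) (2402 / K).
Proof.
  intros HK Hp Hj. pose proof (low_part_bounded p Hp) as HL. pose proof (high_part_bounded p Hp) as HH.
  assert (H0 : 0 <= 0 < / K) by (split; [lra| apply Rinv_0_lt_compat; lra]).
  assert (HcL := carry_round_bounded K 0 _ HK H0 HL).
  assert (HPH : probs (map (flip true) (high_part p)))
    by (apply flip_probs, (bounded_weaken (1/2)); auto; lra).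
  replace (2402 / K) with (1802 / K + 600 / K) by (field; lra).
  destruct (remove_nth_split K p j 0 0 Hj) as [[j' [Hj' [P1 P2]]]|[j' [Hj' [P1 P2]]]];
    rewrite (pmf_perm _ _ P1), (pmf_perm _ _ P2).
  -
    eapply l1_le_dist_trans.
    + pose proof (carry_round_close_remove false K _ HK HPH (low_part p) j' HL Hj') as T.
      unfold ctx_pmf in T. rewrite !map_flip_false in T. exact T.
    + rewrite !(pmf_perm (remove_nth j' (carry_round K 0 (low_part p)) ++ _) _ (Permutation_app_comm _ _)).
      pose proof (carry_round_close true K (remove_nth j' (carry_round K 0 (low_part p))) HK
        (Forall_remove_nth _ _ _ (bounded_weaken (3/4) 1 _ ltac:(lra) HcL)) (high_part p) [] 0 HH
        (Forall_nil _) H0) as T.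
      unfold ctx_pmf in T. simpl app in T. rewrite add_head_0 in T. exact T.
  -
    rewrite Rplus_comm. eapply l1_le_dist_trans.
    + pose proof (carry_round_close false K (map (flip true) (remove_nth j' (high_part p))) HK
        (flip_probs _ _ (Forall_remove_nth _ _ _ (bounded_weaken (1/2) 1 _ ltac:(lra) HH)))
        (low_part p) [] 0 HL (Forall_nil _) H0) as T.
      unfold ctx_pmf in T. simpl app in T. rewrite add_head_0, !map_flip_false in T. exact T.
    + rewrite !(pmf_perm (carry_round K 0 (low_part p) ++ _) _ (Permutation_app_comm _ _)).
      pose proof (carry_round_close_remove true K (carry_round K 0 (low_part p)) HK
        (bounded_weaken (3/4) 1 _ ltac:(lra) HcL) (high_part p) j' HH Hj') as T.
      exact T.
Qed.

(* For k ≥ 4 an O(1/k) bound is below 3000/√k; for k < 4 use tv ≤ 1. *)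
Lemma small_k_or_inv_k k X t : (0 < k)%nat -> 0 <= X <= 3000 -> t <= 1 ->
  ((4 <= k)%nat -> t <= X / INR k) -> t <= 3000 / sqrt (INR k).
Proof.
  intros Hk HX Ht H.
  assert (Hkp : 1 <= INR k) by (apply (le_INR 1); lia).
  assert (Hs : 1 <= sqrt (INR k)) by (rewrite <- sqrt_1; apply sqrt_le_1_alt; lra).
  assert (Hss : sqrt (INR k) * sqrt (INR k) = INR k) by (apply sqrt_sqrt; lra).
  destruct (Nat.lt_ge_cases k 4) as [Hl|Hl].
  - assert (INR k <= 3) by (replace 3 with (INR 3) by (simpl; ring); apply le_INR; lia).
    apply Rle_trans with 1; auto.
    apply (Rmult_le_reg_r (sqrt (INR k))); [lra|].
    replace (3000 / sqrt (INR k) * sqrt (INR k)) with 3000 by (field; lra). nra.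
  - eapply Rle_trans; [exact (H Hl)|].
    set (s := sqrt (INR k)) in *. rewrite <- Hss.
    apply (Rmult_le_reg_r (s * s)); [nra|].
    replace (X / (s * s) * (s * s)) with X by (field; lra).
    replace (3000 / s * (s * s)) with (3000 * s) by (field; lra). nra.
Qed.

Theorem theorem2 :
  exists C : R, 0 < C /\
  forall (n k : nat) (p : list R),
    (0 < n)%nat -> (0 < k)%nat -> length p = n ->
    Forall (fun x => 0 <= x <= 1) p ->
    exists q : list R,
      length q = n /\
      Forall (fun x => 0 <= x <= 1) q /\
      (forall i, (i < n)%nat -> Rabs (nth i q 0 - nth i p 0) <= C / INR k) /\
      (forall i, (i < n)%nat -> exists m : Z, nth i q 0 = IZR m / INR k) /\
      tv_indsum p q <= C / sqrt (INR k) /\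
      (forall j, (j < n)%nat ->
         tv_indsum (remove_nth j p) (remove_nth j q) <= C / sqrt (INR k)).
Proof.
  exists 3000. split; [lra|].
  intros n k p Hn Hk Hlen Hp.
  assert (Hkp : 0 < INR k) by (apply lt_0_INR; auto).
  assert (H0 : 0 <= 0 < / INR k) by (split; [lra| apply Rinv_0_lt_compat; lra]).
  pose proof (round_all_close k p Hk Hp 0 0 H0 H0) as Hclose.
  set (q := round_all (INR k) 0 0 p) in *.
  assert (Hq : probs q) by (eapply grid_close_probs; eauto).
  assert (Hentry : forall i, (i < n)%nat -> grid_close (INR k) (nth i p 0) (nth i q 0))
    by (intros; apply Forall2_nth; auto; lia).
  assert (H4 : forall K, (4 <= K)%nat -> 4 <= INR K)
    by (intros K HK; apply le_INR in HK; simpl in HK; lra).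
  exists q. repeat split; auto.
  - rewrite <- Hlen. symmetry. eapply Forall2_length; eauto.
  - intros i Hi. eapply Rle_trans; [apply (Hentry i Hi)|].
    unfold Rdiv. pose proof (Rinv_0_lt_compat _ Hkp). nra.
  - intros i Hi. apply (Hentry i Hi).
  - apply (small_k_or_inv_k k 600); auto; [lra| apply tv_indsum_le1; auto|].
    intros Hk4. replace (600 / INR k) with (1200 / INR k / 2) by (field; lra).
    apply tv_indsum_le, round_all_l1; auto.
  - intros j Hj. apply (small_k_or_inv_k k 1201); auto; [lra| apply tv_indsum_le1; apply Forall_remove_nth; auto|].
    intros Hk4. replace (1201 / INR k) with (2402 / INR k / 2) by (field; lra).
    apply tv_indsum_le, round_all_l1_remove; auto; lia.
Qed.
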